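(* Let $\chi$ be an indecomposable character on $S(2^\infty)$ with GNS triple $(\pi,\mathcal{H},\xi)$, and let $\alpha\in[0,\infty]$ be such that $tr(P^A)=\mu(A)^\alpha$ for every nice $A\subset X$. Let $s\in S(2^\infty)$ be such that, regarded as a permutation of $X_n$ for some $n$ with $s\in S(2^n)$, all cycles of $s$ have length $1$ or even length. Then $\chi(s)=\mu(Fix(s))^\alpha$.
   Context: Let $X=\{0,1\}^{\mathbb{N}}$ with product measure $\mu=\nu^{\otimes\infty}$, $\nu(\{0\})=\nu(\{1\})=1/2$; $X_n=\{0,1\}^n$; $S(2^n)$ the group of all bijections of $X_n$, acting on $X$ by $s((x,a))=(s(x),a)$; $S(2^\infty)=\bigcup_n S(2^n)$; $Fix(s)=\{x\in X:s(x)=x\}$. A character on a group $G$ is a function $\chi$ with $\chi(g_1g_2)=\chi(g_2g_1)$, $(\chi(g_ig_j^{-1}))_{i,j}$ positive semidefinite for all finite families, and $\chi(e)=1$; indecomposable means not a nontrivial convex combination of two distinct characters. GNS triple: $\pi$ unitary representation on $\mathcal{H}$, $\xi$ unit cyclic vector, $\chi(g)=(\pi(g)\xi,\xi)$; $tr(T)=(T\xi,\xi)$. $A\subset X$ is nice if $A=C\times X$ for some $k$ and $C\subset X_k$. For such $A$ and $m>k$, $s^A_m$ fixes $A$ pointwise and flips the $m$-th coordinate of points outside $A$; $P^A$ is the weak operator limit of $\pi(s^A_m)$. Conventions: $0^0=1$, $x^\infty=0$ for $x\in[0,1)$, $1^\infty=1$. *)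

From HB Require Import structures.
From mathcomp Require Import all_boot all_order all_algebra all_fingroup.
From mathcomp Require Import all_classical all_reals all_analysis.
From mathcomp Require Import complex.
Set Implicit Arguments. Unset Strict Implicit. Unset Printing Implicit Defensive.
Import Order.TTheory GRing.Theory Num.Theory.
Local Open Scope ring_scope.

(* X = {0,1}^N (coordinates indexed from 0), X_n = n.-tuple bool. *)
Definition X := nat -> bool.

Definition pref (n : nat) (x : X) : n.-tuple bool := [tuple x (nat_of_ord i) | i < n].

(* s in S(2^n) acting on X by s((x,a)) = (s(x),a) *)
Definition actS2 (n : nat) (s : {perm n.-tuple bool}) : X -> X :=
  fun x k => match ltnP k n with
             | LtnNotGeq Hk => tnth (s (pref n x)) (Ordinal Hk)
             | _ => x k
             end.

(* elements of S(2^oo), given by a level n and a permutation in S(2^n);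
   the group element itself is the map act, group product is composition *)
Definition S2el := {n : nat & {perm n.-tuple bool}}.
Definition elt (g : S2el) : X -> X := actS2 (projT2 g).
Definition elt_inv (g : S2el) : X -> X := actS2 (projT2 g)^-1.
Definition inS2inf (f : X -> X) : Prop := exists g : S2el, f = elt g.

(* characters on S(2^oo) (complex valued); chi is a function on maps X -> X,
   only its values on S(2^oo) matter *)
Definition is_character (R : realType) (chi : (X -> X) -> R[i]) : Prop :=
  [/\ (forall g1 g2 : S2el, chi (elt g1 \o elt g2) = chi (elt g2 \o elt g1)),
      (forall (k : nat) (g : 'I_k -> S2el) (c : 'I_k -> R[i]),
          0 <= \sum_(i < k) \sum_(j < k)
                 (c i)^* * c j * chi (elt (g i) \o elt_inv (g j)))
    & chi id = 1].

Definition is_indecomposable_character (R : realType)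
    (chi : (X -> X) -> R[i]) : Prop :=
  is_character chi /\
  forall (t : R) (chi1 chi2 : (X -> X) -> R[i]),
    0 < t < 1 -> is_character chi1 -> is_character chi2 ->
    (forall g : S2el, chi (elt g) = (t%:C)%C * chi1 (elt g) + ((1 - t)%:C)%C * chi2 (elt g)) ->
    (forall g : S2el, chi1 (elt g) = chi2 (elt g)).

(* nice set A = C x X *)
Definition cyl (k : nat) (C : {set k.-tuple bool}) : set X :=
  [set x | pref k x \in C].

Definition mu_cyl (R : realType) (k : nat) (C : {set k.-tuple bool}) : R :=
  #|C|%:R / 2%:R ^+ k.

(* s^A_m for A = C x X : fixes A, flips coordinate m outside A *)
Definition sA (k : nat) (C : {set k.-tuple bool}) (m : nat) : X -> X :=
  fun x => if pref k x \in C then x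
           else fun j => if j == m then ~~ x j else x j.

(* x ^ alpha, alpha in [0, +oo], with 0^0 = 1, x^oo = 0 for x in [0,1), 1^oo = 1 *)
Definition powE (R : realType) (x : R) (a : \bar R) : R :=
  match a with
  | EFin r => x `^ r
  | +oo%E => if x == 1 then 1 else 0
  | -oo%E => 0
  end.

Definition cycles_one_or_even (n : nat) (s : {perm n.-tuple bool}) : Prop :=
  forall t : n.-tuple bool, #|porbit s t| = 1%N \/ ~~ odd #|porbit s t|.

(* Fix(s) = {x | s x = x} = F x X with F the fixed tuples *)
Definition fixed_tuples (n : nat) (s : {perm n.-tuple bool}) : {set n.-tuple bool} :=
  [set t | s t == t].

From HB Require Import structures.
From mathcomp Require Import all_boot all_order all_algebra all_fingroup.
From mathcomp Require Import all_classical all_reals all_analysis.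
From mathcomp Require Import complex ring.
Import Order.TTheory GRing.Theory Num.Theory.
Import numFieldNormedType.Exports.
Set Implicit Arguments. Unset Strict Implicit. Unset Printing Implicit Defensive.

(* Let u_m = s^A_m for A = Fix(s) and L = chi(u_n).  Conjugating by a swap of
   coordinates shows that chi(u_m) = L for all m >= n, so L = mu(Fix s)^alpha by
   the hypothesis on tr(P^A), and it remains to show chi(s) = L.  For distinct
   i, j >= n, conjugation by a controlled flip gives chi(u_i u_j) = L and
   chi(r u_i u_j) = L for every involution r fixing Fix(s) pointwise.  Since the
   cycles of s have even length, the points moved by s can be 2-coloured so that
   s alternates colours; flipping coordinates i and j on one colour conjugates s
   into s u_i u_j, hence chi(s u_i u_j) = chi(s), and likewise for s^-1.
   Writing s = r1 r2 with involutions r1, r2 fixing Fix(s) (reflect each cycle),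
   positive definiteness of chi on the families (s u_i, u_i) and
   (r1 u_i, u_i, r2 u_i), i < N, with coefficients (1, -1) and (1, -2, 1),
   squeezes chi(s) - L between -c/N and c'/N. *)

(** * Cycles of a permutation *)

Lemma modn_subn_mod l p : p < l -> (l - (l - p) %% l) %% l = p.
Proof.
case: p => [|p] lt_pl; first by rewrite subn0 modnn subn0 modnn.
have lt_lp : l - p.+1 < l by rewrite ltn_subrL (leq_ltn_trans _ lt_pl).
by rewrite (modn_small lt_lp) subKn ?modn_small // ltnW.
Qed.

Lemma modn_subn_succ l p : p < l -> (l - p.+1 %% l).+1 %% l = (l - p) %% l.
Proof.
case: (ltngtP p.+1 l) => [lt_pl|//|<-] _.
  by rewrite (modn_small lt_pl) (subnSK (ltnW lt_pl)).
by rewrite modnn subn0 subSnn -[p.+2]/(1 + p.+1) modnDr.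
Qed.

Section CycleCoordinates.
Variables (T : finType) (s : {perm T}).
Local Notation len t := #|porbit s t|.

Definition cycle_base t := odflt t [pick y in porbit s t].
Definition cycle_pos t := index t (traject s (cycle_base t) (len t)).
(* Writing the cycle through t as the iterates s^k of cycle_base t, k mod its
   length l, this is the reflection k |-> l - k. *)
Definition cycle_reflect t := iter (len t - cycle_pos t) s (cycle_base t).

Lemma porbit_iter k t : porbit s (iter k s t) = porbit s t.
Proof. by rewrite -permX porbit_perm. Qed.

Lemma porbit_cycle_base t : porbit s (cycle_base t) = porbit s t.
Proof.
apply/eqP; rewrite eq_porbit_mem /cycle_base.
by case: pickP => [//|/(_ t)]; rewrite porbit_id.
Qed.

Lemma eq_cycle_base t t' : porbit s t = porbit s t' -> cycle_base t = cycle_base t'.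
Proof. by rewrite /cycle_base => ->; case: pickP => [//|/(_ t')]; rewrite porbit_id. Qed.

Lemma cycle_base_iter k t : cycle_base (iter k s (cycle_base t)) = cycle_base t.
Proof. by apply: eq_cycle_base; rewrite porbit_iter porbit_cycle_base. Qed.

Lemma len_iter k t : len (iter k s (cycle_base t)) = len t.
Proof. by rewrite porbit_iter porbit_cycle_base. Qed.

Lemma iter_mod_porbit k t : iter k s t = iter (k %% len t) s t.
Proof.
rewrite {1}(divn_eq k (len t)) addnC iterD; congr iter.
by elim: (k %/ len t) => //= m IH; rewrite mulSn iterD IH iter_porbit.
Qed.

Lemma mem_traject_cycle_base t : t \in traject s (cycle_base t) (len t).
Proof. by rewrite -porbit_cycle_base -porbit_traject porbit_cycle_base porbit_id. Qed.

Lemma cycle_pos_lt t : cycle_pos t < len t.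
Proof.
by rewrite -[X in _ < X](size_traject s (cycle_base t)) index_mem mem_traject_cycle_base.
Qed.

Lemma iter_cycle_pos t : iter (cycle_pos t) s (cycle_base t) = t.
Proof.
rewrite -(nth_traject _ (cycle_pos_lt t)).
exact/nth_index/mem_traject_cycle_base.
Qed.

Lemma cycle_pos_iter k t : cycle_pos (iter k s (cycle_base t)) = k %% len t.
Proof.
rewrite /cycle_pos cycle_base_iter len_iter (iter_mod_porbit k) porbit_cycle_base.
have lt_mod : k %% len t < len t by rewrite ltn_pmod // lt0n card_porbit_neq0.
rewrite -(nth_traject _ lt_mod) index_uniq ?size_traject //.
by rewrite -porbit_cycle_base uniq_traject_porbit.
Qed.

Lemma cycle_pos_perm t : cycle_pos (s t) = (cycle_pos t).+1 %% len t.
Proof. by rewrite -{1}(iter_cycle_pos t) -iterS cycle_pos_iter. Qed.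

Lemma cycle_reflectK : involutive cycle_reflect.
Proof.
move=> t; rewrite {1}/cycle_reflect cycle_base_iter len_iter cycle_pos_iter.
rewrite iter_mod_porbit porbit_cycle_base modn_subn_mod ?cycle_pos_lt //.
exact: iter_cycle_pos.
Qed.

Lemma cycle_reflect_fixed t : s t = t -> cycle_reflect t = t.
Proof.
move=> st; have : cycle_base t \in porbit s t by rewrite -porbit_cycle_base porbit_id.
by case/porbitP=> k bE; rewrite /cycle_reflect bE permX !iter_fix.
Qed.

Lemma cycle_reflect_conj t : s (cycle_reflect (s t)) = cycle_reflect t.
Proof.
have Est : porbit s (s t) = porbit s t by rewrite -[s t]/(iter 1 s t) porbit_iter.
rewrite /cycle_reflect (eq_cycle_base Est) Est cycle_pos_perm -iterS.
by rewrite iter_mod_porbit [RHS]iter_mod_porbit porbit_cycle_base modn_subn_succ ?cycle_pos_lt.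
Qed.
End CycleCoordinates.

Lemma involutive_permV (T : finType) (r : {perm T}) : involutive r -> (r^-1)%g = r.
Proof. by move=> rK; apply/permP => t; rewrite -{1}(rK t) permK. Qed.

Lemma perm_involution_factor (T : finType) (s : {perm T}) :
  exists r1 r2 : {perm T}, [/\ s = (r2 * r1)%g, involutive r1, involutive r2
    & forall t, s t = t -> r1 t = t /\ r2 t = t].
Proof.
pose r2 := perm (can_inj (cycle_reflectK s)).
have r2E t : r2 t = cycle_reflect s t by rewrite permE.
exists (r2 * s)%g, r2; split=> [|t|t|t st].
- by apply/permP => t; rewrite !permM !r2E cycle_reflectK.
- by rewrite !permM !r2E cycle_reflect_conj cycle_reflectK.
- by rewrite !r2E cycle_reflectK.
- by rewrite permM !r2E cycle_reflect_fixed.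
Qed.

Lemma even_cycles_colouring (T : finType) (s : {perm T}) :
  (forall t, #|porbit s t| = 1 \/ ~~ odd #|porbit s t|) ->
  exists Q : pred T, (forall t, Q t -> s t != t) /\ (forall t, s t != t -> Q (s t) = ~~ Q t).
Proof.
move=> cyc; exists (fun t => (s t != t) && odd (cycle_pos s t)).
split=> [t /andP[] //|t nst].
have nsst : s (s t) != s t by apply: contra nst => /eqP /perm_inj ->.
have len_even : ~~ odd #|porbit s t|.
  case: (cyc t) => // len1; case/negP: nst; apply/eqP.
  by have := iter_porbit s t; rewrite len1.
by rewrite nst nsst /= cycle_pos_perm odd_mod ?(negbTE len_even).
Qed.

Local Open Scope classical_set_scope.
Local Open Scope ring_scope.

(** * Maps of X that act on finitely many coordinates *)

Definition agree (M : nat) (x y : X) := forall k, (k < M)%N -> x k = y k.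

Lemma tnth_pref n x (i : 'I_n) : tnth (pref n x) i = x i.
Proof. by rewrite /pref tnth_mktuple. Qed.

Lemma pref_agree n x y : pref n x = pref n y <-> agree n x y.
Proof.
split=> [E k kn|A]; last by apply: eq_from_tnth => i; rewrite !tnth_pref A.
by have := congr1 (fun t => tnth t (Ordinal kn)) E; rewrite !tnth_pref.
Qed.

Lemma agree_pref n M x y : (n <= M)%N -> agree M x y -> pref n x = pref n y.
Proof. by move=> nM A; apply/pref_agree => k kn; apply: A; apply: leq_trans nM. Qed.

Lemma eq_from_pref n (x y : X) :
  pref n x = pref n y -> (forall k, (n <= k)%N -> x k = y k) -> x = y.
Proof.
move=> /pref_agree A T; apply: funext => k.
by case: (ltnP k n) => kn; [exact: A | exact: T].
Qed.

Lemma actS2_lt n (p : {perm n.-tuple bool}) x (i : 'I_n) :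
  actS2 p x i = tnth (p (pref n x)) i.
Proof.
rewrite /actS2; case: ltnP => H; first by congr tnth; apply: val_inj.
by move: (ltn_ord i); rewrite ltnNge H.
Qed.

Lemma actS2_ge n (p : {perm n.-tuple bool}) x k : (n <= k)%N -> actS2 p x k = x k.
Proof. by rewrite /actS2; case: ltnP => //; rewrite ltnNge => /negP. Qed.

Lemma pref_actS2 n (p : {perm n.-tuple bool}) x : pref n (actS2 p x) = p (pref n x).
Proof. by apply: eq_from_tnth => i; rewrite tnth_pref actS2_lt. Qed.

Lemma actS2M n (p q : {perm n.-tuple bool}) : actS2 (p * q) = actS2 q \o actS2 p.
Proof.
apply: funext => x; apply: (@eq_from_pref n) => [|k nk].
  by rewrite /= !pref_actS2 permM.
by rewrite /= !actS2_ge.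
Qed.

Lemma actS2_1 n : actS2 (1 : {perm n.-tuple bool}) = id.
Proof.
apply: funext => x; apply: (@eq_from_pref n) => [|k nk].
  by rewrite pref_actS2 perm1.
by rewrite actS2_ge.
Qed.

Lemma actS2K n (p : {perm n.-tuple bool}) : cancel (actS2 p) (actS2 p^-1).
Proof. by move=> x; rewrite -[RHS]/(id x) -(actS2_1 n) -(mulgV p) actS2M. Qed.

Lemma actS2_invol n (r : {perm n.-tuple bool}) : involutive r -> involutive (actS2 r).
Proof.
by move=> rK; have := actS2K r; rewrite involutive_permV.
Qed.

Definition finitary (M : nat) (f : X -> X) :=
  (forall x k, (M <= k)%N -> f x k = x k) /\
  (forall x y, agree M x y -> agree M (f x) (f y)).

Definition finitary_bij (M : nat) (f g : X -> X) :=
  [/\ finitary M f, finitary M g, cancel f g & cancel g f].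

Lemma finitary_mono M M' f : (M <= M')%N -> finitary M f -> finitary M' f.
Proof.
move=> MM' [fT fA]; split=> [x k kM|x y A k kM]; first by apply: fT; apply: leq_trans kM.
case: (ltnP k M) => kM'; last by rewrite !fT //; apply: A.
by apply: fA kM' => j jM; apply: A; apply: leq_trans MM'.
Qed.

Lemma finitary_comp M f g : finitary M f -> finitary M g -> finitary M (f \o g).
Proof.
move=> [fT fA] [gT gA]; split=> [x k kM|x y A] /=; first by rewrite fT ?gT.
by apply: fA; apply: gA.
Qed.

Lemma finitary_actS2 M n (p : {perm n.-tuple bool}) : (n <= M)%N -> finitary M (actS2 p).
Proof.
move=> nM; apply: finitary_mono nM _; split=> [x k|x y]; first exact: actS2_ge.
by move=> /pref_agree A; apply/pref_agree; rewrite !pref_actS2 A.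
Qed.

Lemma finitary_bij_id M : finitary_bij M id id.
Proof. by []. Qed.

Lemma finitary_bij_invol M f : finitary M f -> involutive f -> finitary_bij M f f.
Proof. by []. Qed.

Lemma finitary_bij_sym M f g : finitary_bij M f g -> finitary_bij M g f.
Proof. by case. Qed.

Lemma finitary_bij_comp M f f' g g' :
  finitary_bij M f f' -> finitary_bij M g g' -> finitary_bij M (f \o g) (g' \o f').
Proof.
case=> ff ff' fK f'K [gg gg' gK g'K]; split; try exact: finitary_comp.
  by move=> x /=; rewrite fK gK.
by move=> x /=; rewrite g'K f'K.
Qed.

Lemma finitary_bij_actS2 M n (p : {perm n.-tuple bool}) :
  (n <= M)%N -> finitary_bij M (actS2 p) (actS2 p^-1).
Proof.
move=> nM; split; try exact: finitary_actS2; first exact: actS2K.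
by have := actS2K p^-1; rewrite invgK.
Qed.

Definition extX M (t : M.-tuple bool) : X := fun k => nth false t k.

Lemma pref_extX M (t : M.-tuple bool) : pref M (extX t) = t.
Proof. by apply: eq_from_tnth => i; rewrite tnth_pref /extX (tnth_nth false). Qed.

Lemma agree_extX M x : agree M (extX (pref M x)) x.
Proof. by apply/pref_agree; rewrite pref_extX. Qed.

Lemma actS2_finitary M (q : {perm M.-tuple bool}) g :
  finitary M g -> (forall t, q t = pref M (g (extX t))) -> actS2 q = g.
Proof.
move=> [gT gA] qE; apply: funext => x; apply: (@eq_from_pref M) => [|k kM].
  by rewrite pref_actS2 qE; apply/pref_agree/gA/agree_extX.
by rewrite actS2_ge // gT.
Qed.

Lemma finitary_bij_S2el M f g :
  finitary_bij M f g -> exists e : S2el, elt e = f /\ elt_inv e = g.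
Proof.
case=> ff fg fK gK.
have pref_canc (u v : X -> X) : finitary M v -> cancel u v ->
    cancel (fun t => pref M (u (extX t))) (fun t => pref M (v (extX t))).
  move=> [_ vA] uK t; have /pref_agree -> := vA _ _ (agree_extX (u (extX t))).
  by rewrite uK pref_extX.
pose p := perm (can_inj (pref_canc f g fg fK)).
have pV : (p^-1)%g =1 (fun t => pref M (g (extX t))).
  by move=> t; apply: (@perm_inj _ p); rewrite permKV permE (pref_canc g f ff gK).
by exists (existT _ M p); split; apply: actS2_finitary => // t; rewrite permE.
Qed.

(** * Positivity of characters *)

Lemma sum_kernel (V : zmodType) (N : nat) (a b : V) :
  \sum_(i < N) \sum_(j < N) (if i == j then a else b) = a *+ N + b *+ (N * N.-1).
Proof.
have row (i : 'I_N) : \sum_(j < N) (if i == j then a else b) = a + b *+ N.-1.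
  rewrite (bigD1 i) //= eqxx (eq_bigr (fun _ => b)) => [|j /negbTE].
    by rewrite sumr_const cardC1 card_ord.
  by rewrite eq_sym => ->.
by rewrite (eq_bigr _ (fun i _ => row i)) sumr_const card_ord mulrnDl -mulrnA mulnC.
Qed.

Lemma sum_pair_kernel (V : pzRingType) (T : finType) (N : nat) (w A B : T -> T -> V) :
  \sum_(x : T * 'I_N) \sum_(y : T * 'I_N)
      w x.1 y.1 * (if x.2 == y.2 then A x.1 y.1 else B x.1 y.1) =
  \sum_a \sum_b w a b * (A a b *+ N + B a b *+ (N * N.-1)).
Proof.
rewrite -(pair_bigA _ (fun a (i : 'I_N) => \sum_(y : T * 'I_N) w a y.1 *
                                   (if i == y.2 then A a y.1 else B a y.1))).
apply: eq_bigr => a _.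
under eq_bigr => i _ do
  rewrite -(pair_bigA _ (fun b (j : 'I_N) => w a b * (if i == j then A a b else B a b))).
rewrite exchange_big; apply: eq_bigr => b _.
rewrite -sum_kernel mulr_sumr; apply: eq_bigr => i _.
by rewrite mulr_sumr.
Qed.

Section Character.
Variables (R : realType) (chi : (X -> X) -> R[i]).
Hypothesis chi_char : is_character chi.

Lemma chi_comm M f f' g g' :
  finitary_bij M f f' -> finitary_bij M g g' -> chi (f \o g) = chi (g \o f).
Proof.
case: chi_char => chiC _ _ /finitary_bij_S2el[e1 [<- _]] /finitary_bij_S2el[e2 [<- _]].
exact: chiC.
Qed.

Lemma chi_conj M f f' g g' :
  finitary_bij M f f' -> finitary_bij M g g' -> chi (f \o g \o f') = chi g.
Proof.
move=> Bf Bg; have [_ _ fK _] := Bf.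
rewrite (chi_comm (finitary_bij_comp Bf Bg) (finitary_bij_sym Bf)).
by congr chi; apply: funext => x /=; rewrite fK.
Qed.

Lemma chi_psd (T : finType) M (F F' : T -> X -> X) (c : T -> R[i]) :
  (forall x, finitary_bij M (F x) (F' x)) ->
  0 <= \sum_x \sum_y (c x)^* * c y * chi (F x \o F' y).
Proof.
case: chi_char => _ chiP _ BF.
have [e eE] := choice (fun x => finitary_bij_S2el (BF x)).
rewrite (big_enum_val (A := predT)).
under eq_bigr => i _ do rewrite (big_enum_val (A := predT)).
have := chiP #|T| (e \o enum_val) (c \o enum_val).
congr (_ <= _); apply: eq_bigr => i _; apply: eq_bigr => j _.
by have [-> _] := eE (enum_val i); have [_ ->] := eE (enum_val j).
Qed.

Lemma chi_gram (T : finType) M N (F F' : T -> X -> X) (U : 'I_N -> X -> X)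
    (c : T -> R[i]) (A B : T -> T -> R[i]) :
  (forall a, finitary_bij M (F a) (F' a)) -> (forall i, finitary_bij M (U i) (U i)) ->
  (forall a b i j, chi (F' b \o F a \o U i \o U j) = if i == j then A a b else B a b) ->
  0 <= \sum_a \sum_b (c a)^* * c b * (A a b *+ N + B a b *+ (N * N.-1)).
Proof.
move=> BF BU K.
have := chi_psd (fun x : T * 'I_N => c x.1) (fun x => finitary_bij_comp (BF x.1) (BU x.2)).
have entry (x y : T * 'I_N) : chi ((F x.1 \o U x.2) \o (U y.2 \o F' y.1)) =
    if x.2 == y.2 then A x.1 y.1 else B x.1 y.1.
  rewrite -K; exact: chi_comm (finitary_bij_comp (finitary_bij_comp (BF _) (BU _)) (BU _))
                              (finitary_bij_sym (BF _)).
under eq_bigr => x _ do under eq_bigr => y _ do rewrite entry.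
by rewrite (sum_pair_kernel _ (fun a b => (c a)^* * c b)).
Qed.
End Character.

(** * Flips, swaps and controlled maps *)

Definition flip (m : nat) (x : X) : X := fun k => if k == m then ~~ x k else x k.
Definition swap_coord (i j : nat) (x : X) : X :=
  fun k => if k == i then x j else if k == j then x i else x k.
Definition ctrl (i : nat) (f : X -> X) (x : X) : X := if x i then f x else x.
Definition cnot (i j : nat) : X -> X := ctrl i (flip j).
Definition gate n (P : pred (n.-tuple bool)) (f : X -> X) (x : X) : X :=
  if P (pref n x) then f x else x.

Lemma flipK m : involutive (flip m).
Proof. by move=> x; apply: funext => k; rewrite /flip; case: eqP => // ->; rewrite negbK. Qed.

Lemma flipC i j x : flip i (flip j x) = flip j (flip i x).
Proof. by apply: funext => k; rewrite /flip; case: eqP; case: eqP. Qed.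

Lemma flip2K i j : involutive (flip i \o flip j).
Proof. by move=> x /=; rewrite [flip j (flip i _)]flipC !flipK. Qed.

Lemma pref_flip n m x : (n <= m)%N -> pref n (flip m x) = pref n x.
Proof.
move=> nm; apply/pref_agree => k kn; rewrite /flip.
by case: eqP => // km; move: kn; rewrite km ltnNge nm.
Qed.

Lemma pref_swap_coord n i j x :
  (n <= i)%N -> (n <= j)%N -> pref n (swap_coord i j x) = pref n x.
Proof.
move=> ni nj; apply/pref_agree => k kn; rewrite /swap_coord.
case: eqP => [ki|_]; first by move: kn; rewrite ki ltnNge ni.
by case: eqP => // kj; move: kn; rewrite kj ltnNge nj.
Qed.

Lemma pref_ctrl n i f x :
  (forall y, pref n (f y) = pref n y) -> pref n (ctrl i f x) = pref n x.
Proof. by rewrite /ctrl; case: ifP. Qed.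

Lemma swap_coordK i j : involutive (swap_coord i j).
Proof.
move=> x; apply: funext => k; rewrite /swap_coord.
by do ![case: eqP => ? //; subst].
Qed.

Lemma swap_coord_flip i j x : swap_coord i j (flip i (swap_coord i j x)) = flip j x.
Proof.
apply: funext => k; rewrite /swap_coord /flip.
by do ![case: eqP => ? //; subst].
Qed.

Lemma ctrlK i f : involutive f -> (forall x, f x i = x i) -> involutive (ctrl i f).
Proof. by move=> fK fi x; rewrite /ctrl; case xi: (x i); rewrite ?fi xi ?fK. Qed.

Lemma cnotK i j : i != j -> involutive (cnot i j).
Proof. by move=> ij; apply: ctrlK => [|x]; [exact: flipK | rewrite /flip (negbTE ij)]. Qed.

Lemma cnot_flip i j x : i != j -> cnot i j (flip i (cnot i j x)) = flip i (flip j x).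
Proof.
move=> ij; rewrite /cnot /ctrl.
have flip_i y : flip i y i = ~~ y i by rewrite /flip eqxx.
have flip_j y : flip j y i = y i by rewrite /flip (negbTE ij).
by case xi: (x i); rewrite flip_i ?flip_j xi //= flipC.
Qed.

Lemma gate_conj n (P : pred (n.-tuple bool)) f g g' :
  (forall x, pref n (g' x) = pref n x) -> cancel g' g ->
  g \o gate P f \o g' = gate P (g \o f \o g').
Proof. by move=> pg' g'K; apply: funext => x; rewrite /gate /= pg'; case: ifP. Qed.

Lemma gate_comp n (P : pred (n.-tuple bool)) f g :
  (forall x, pref n (g x) = pref n x) -> gate P f \o gate P g = gate P (f \o g).
Proof.
by move=> pg; apply: funext => x; rewrite /gate /=; case Px: (P (pref n x)); rewrite ?pg Px.
Qed.

Lemma gateK n (P : pred (n.-tuple bool)) f :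
  (forall x, pref n (f x) = pref n x) -> involutive f -> involutive (gate P f).
Proof. by move=> pf fK x; rewrite /gate; case Px: (P (pref n x)); rewrite ?pf Px ?fK. Qed.

Lemma sA_gate n (C : {set n.-tuple bool}) m : sA C m = gate [predC C] (flip m).
Proof. by apply: funext => x; rewrite /sA /gate /=; case: ifP. Qed.

Lemma finitary_flip M m : (m < M)%N -> finitary M (flip m).
Proof.
move=> mM; split=> [x k Mk|x y A k kM]; rewrite /flip; last by rewrite !A.
by case: eqP => // km; move: mM; rewrite -km ltnNge Mk.
Qed.

Lemma finitary_swap_coord M i j : (i < M)%N -> (j < M)%N -> finitary M (swap_coord i j).
Proof.
move=> iM jM; split=> [x k Mk|x y A k kM]; rewrite /swap_coord; last by rewrite !A.
case: eqP => [ki|_]; first by move: iM; rewrite -ki ltnNge Mk.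
by case: eqP => // kj; move: jM; rewrite -kj ltnNge Mk.
Qed.

Lemma finitary_ctrl M i f : (i < M)%N -> finitary M f -> finitary M (ctrl i f).
Proof.
move=> iM [fT fA]; split=> [x k Mk|x y A]; rewrite /ctrl.
  by case: ifP => // _; apply: fT.
by rewrite (A i iM); case: ifP => // _; apply: fA.
Qed.

Lemma finitary_gate M n (P : pred (n.-tuple bool)) f :
  (n <= M)%N -> finitary M f -> finitary M (gate P f).
Proof.
move=> nM [fT fA]; split=> [x k Mk|x y A]; rewrite /gate.
  by case: ifP => // _; apply: fT.
by rewrite (agree_pref nM A); case: ifP => // _; apply: fA.
Qed.

Lemma actS2_flip n (p : {perm n.-tuple bool}) m x :
  (n <= m)%N -> actS2 p (flip m x) = flip m (actS2 p x).
Proof.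
move=> nm; apply: (@eq_from_pref n) => [|k nk].
  by rewrite pref_actS2 !pref_flip // pref_actS2.
by rewrite actS2_ge // /flip actS2_ge.
Qed.

Lemma actS2_cnot n (p : {perm n.-tuple bool}) i j :
  (n <= i)%N -> (n <= j)%N -> actS2 p \o cnot i j = cnot i j \o actS2 p.
Proof.
move=> ni nj; apply: funext => x; rewrite /= /cnot /ctrl actS2_ge //.
by case: (x i) => //; apply: actS2_flip.
Qed.

Lemma actS2_fixed n (p : {perm n.-tuple bool}) x : p (pref n x) = pref n x -> actS2 p x = x.
Proof.
move=> px; apply: (@eq_from_pref n) => [|k nk]; first by rewrite pref_actS2.
exact: actS2_ge.
Qed.

Lemma ctrl_conj_sA n (C : {set n.-tuple bool}) (r : {perm n.-tuple bool}) i :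
  (n <= i)%N -> involutive r -> {in C, forall t, r t = t} ->
  ctrl i (actS2 r) \o (actS2 r \o sA C i) \o ctrl i (actS2 r) = sA C i.
Proof.
move=> ni rK rC; have RK y : actS2 r (actS2 r y) = y := actS2_invol rK y.
have rCC t : (r t \in C) = (t \in C).
  by apply/idP/idP => [rtC|tC]; [rewrite -(rK t) rC | rewrite rC].
have RC y : pref n y \in C -> actS2 r y = y by move=> /rC; apply: actS2_fixed.
have Ri y : actS2 r y i = y i by rewrite actS2_ge.
have flip_i y : flip i y i = ~~ y i by rewrite /flip eqxx.
apply: funext => x; rewrite /= /ctrl sA_gate /gate /=.
case xC: (pref n x \in C); case xi: (x i).
- by rewrite pref_actS2 rCC xC /= !RK xi RC.
- by rewrite xC /= RK RC // xi.
- by rewrite pref_actS2 rCC xC /= actS2_flip // RK flip_i xi.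
- by rewrite xC /= actS2_flip // flip_i Ri xi /= actS2_flip // RK.
Qed.

Lemma colour_conj n (s : {perm n.-tuple bool}) (Q : pred (n.-tuple bool)) i j :
  (n <= i)%N -> (n <= j)%N ->
  (forall t, Q t -> s t != t) -> (forall t, s t != t -> Q (s t) = ~~ Q t) ->
  gate Q (flip i \o flip j) \o actS2 s \o gate Q (flip i \o flip j) =
  actS2 s \o gate [predC fixed_tuples s] (flip i \o flip j).
Proof.
move=> ni nj Qmoved Qalt; apply: funext => x; rewrite /= /gate /= inE.
have pref_ff y : pref n (flip i (flip j y)) = pref n y by rewrite !pref_flip.
case: (eqVneq (s (pref n x)) (pref n x)) => [sx|nsx] /=.
  have Qx : Q (pref n x) = false by apply/negP => /Qmoved; rewrite sx eqxx.
  by rewrite Qx actS2_fixed // Qx.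
case Qx: (Q (pref n x)); rewrite pref_actS2 ?pref_ff Qalt // Qx //=.
by rewrite !actS2_flip.
Qed.

Lemma finitary_bij_sA M n (C : {set n.-tuple bool}) m :
  (n <= m)%N -> (m < M)%N -> finitary_bij M (sA C m) (sA C m).
Proof.
move=> nm mM; rewrite sA_gate; apply: finitary_bij_invol.
  by apply: finitary_gate (finitary_flip mM); apply: leq_trans (ltnW mM).
by apply: gateK => [x|]; [exact: pref_flip | exact: flipK].
Qed.

Lemma sA_sA n (C : {set n.-tuple bool}) i j :
  (n <= j)%N -> sA C i \o sA C j = gate [predC C] (flip i \o flip j).
Proof. by move=> nj; rewrite !sA_gate gate_comp // => x; apply: pref_flip. Qed.

Lemma sA_conj_swap n (C : {set n.-tuple bool}) i j :
  (n <= i)%N -> (n <= j)%N -> swap_coord i j \o sA C i \o swap_coord i j = sA C j.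
Proof.
move=> ni nj; rewrite !sA_gate gate_conj => [|x|]; last exact: swap_coordK.
  by congr gate; apply: funext => x; apply: swap_coord_flip.
exact: pref_swap_coord.
Qed.

Lemma sA_conj_cnot n (C : {set n.-tuple bool}) i j :
  (n <= i)%N -> (n <= j)%N -> i != j ->
  cnot i j \o sA C i \o cnot i j = sA C i \o sA C j.
Proof.
move=> ni nj ij; rewrite sA_sA // sA_gate gate_conj => [|x|]; last exact: cnotK.
  by congr gate; apply: funext => x; apply: cnot_flip.
by apply: pref_ctrl => y; apply: pref_flip.
Qed.

Lemma finitary_bij_cnot M i j :
  (i < M)%N -> (j < M)%N -> i != j -> finitary_bij M (cnot i j) (cnot i j).
Proof.
move=> iM jM ij; apply: finitary_bij_invol (cnotK ij).
by apply: finitary_ctrl iM _; apply: finitary_flip.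
Qed.

(** * Values of chi on the products g u_i u_j *)

Definition sA_kernel (R : realType) (chi : (X -> X) -> R[i]) n (C : {set n.-tuple bool})
    (g : X -> X) (a b : R[i]) :=
  forall i j, (n <= i)%N -> (n <= j)%N ->
    chi (g \o sA C i \o sA C j) = if i == j then a else b.

Section Kernels.
Variables (R : realType) (chi : (X -> X) -> R[i]).
Hypothesis chi_char : is_character chi.
Variable n : nat.

Lemma chi_sA (C : {set n.-tuple bool}) m : (n <= m)%N -> chi (sA C m) = chi (sA C n).
Proof.
move=> nm; have nm1 : (n < m.+1)%N by rewrite ltnS.
rewrite -(sA_conj_swap C (leqnn n) nm).
apply: (chi_conj chi_char _ (finitary_bij_sA C (leqnn n) nm1)).
by apply: finitary_bij_invol; [exact: finitary_swap_coord | exact: swap_coordK].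
Qed.

Lemma comp_sA_sA (C : {set n.-tuple bool}) (T : Type) (g : X -> T) i :
  (n <= i)%N -> g \o sA C i \o sA C i = g.
Proof.
move=> ni; apply: funext => x /=.
by have [_ _ ->] := finitary_bij_sA C ni (ltnSn i).
Qed.

Lemma sA_kernel_id (C : {set n.-tuple bool}) : sA_kernel chi C id 1 (chi (sA C n)).
Proof.
move=> i j ni nj; case: eqP => [<-|/eqP ij].
  by rewrite comp_sA_sA //; case: chi_char.
have [iM jM] : (i < (i + j).+1)%N /\ (j < (i + j).+1)%N by rewrite !ltnS leq_addr leq_addl.
change (chi (sA C i \o sA C j) = chi (sA C n)).
rewrite -(sA_conj_cnot C ni nj ij).
by rewrite (chi_conj chi_char (finitary_bij_cnot iM jM ij) (finitary_bij_sA C ni iM)) chi_sA.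
Qed.

Lemma sA_kernel_invol (C : {set n.-tuple bool}) (r : {perm n.-tuple bool}) :
  involutive r -> {in C, forall t, r t = t} ->
  sA_kernel chi C (actS2 r) (chi (actS2 r)) (chi (sA C n)).
Proof.
move=> rK rC i j ni nj; case: eqP => [<-|/eqP ij]; first by rewrite comp_sA_sA.
have [iM jM] : (i < (i + j).+1)%N /\ (j < (i + j).+1)%N by rewrite !ltnS leq_addr leq_addl.
have nM : (n <= (i + j).+1)%N by apply: leq_trans (ltnW iM).
have Br : finitary_bij (i + j).+1 (actS2 r) (actS2 r).
  exact: finitary_bij_invol (finitary_actS2 _ nM) (actS2_invol rK).
have Bri := finitary_bij_comp Br (finitary_bij_sA C ni iM).
have cnot_conj : actS2 r \o sA C i \o sA C j = cnot i j \o (actS2 r \o sA C i) \o cnot i j.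
  apply: funext => x /=.
  have := congr1 (fun f => f x) (sA_conj_cnot C ni nj ij); rewrite /= => <-.
  by have := congr1 (fun f => f (sA C i (cnot i j x))) (actS2_cnot r ni nj).
have Bctrl : finitary_bij (i + j).+1 (ctrl i (actS2 r)) (ctrl i (actS2 r)).
  apply: finitary_bij_invol; first by apply: finitary_ctrl iM _; apply: finitary_actS2.
  by apply: ctrlK => [|x]; [exact: actS2_invol | exact: actS2_ge].
rewrite /= cnot_conj (chi_conj chi_char (finitary_bij_cnot iM jM ij) Bri).
by rewrite -(chi_conj chi_char Bctrl Bri) ctrl_conj_sA // chi_sA.
Qed.

Lemma sA_kernel_colouring (s : {perm n.-tuple bool}) (Q : pred (n.-tuple bool)) :
  (forall t, Q t -> s t != t) -> (forall t, s t != t -> Q (s t) = ~~ Q t) ->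
  sA_kernel chi (fixed_tuples s) (actS2 s) (chi (actS2 s)) (chi (actS2 s)).
Proof.
move=> Qmoved Qalt i j ni nj; rewrite if_same.
have [iM jM] : (i < (i + j).+1)%N /\ (j < (i + j).+1)%N by rewrite !ltnS leq_addr leq_addl.
have nM : (n <= (i + j).+1)%N by apply: leq_trans (ltnW iM).
set colour := gate Q (flip i \o flip j).
have Bgate : finitary_bij (i + j).+1 colour colour.
  apply: finitary_bij_invol; last by apply: gateK (@flip2K i j) => x; rewrite !pref_flip.
  by apply: finitary_gate nM _; apply: finitary_comp; apply: finitary_flip.
change (chi (actS2 s \o (sA (fixed_tuples s) i \o sA (fixed_tuples s) j)) = chi (actS2 s)).
rewrite sA_sA // -(colour_conj ni nj Qmoved Qalt).
exact: (chi_conj chi_char Bgate (finitary_bij_actS2 s nM)).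
Qed.
End Kernels.

Lemma actS2VK n (p : {perm n.-tuple bool}) : actS2 p^-1 \o actS2 p = id.
Proof. by apply: funext => x; apply: actS2K. Qed.

(** * Squeezing chi(s) against chi(u_n) *)

Section GramBounds.
Variables (R : realType) (chi : (X -> X) -> R[i]).
Hypothesis chi_char : is_character chi.
Variables (n : nat) (C : {set n.-tuple bool}).

Lemma chi_gram_sA (T : finType) N (F F' : T -> X -> X) (c : T -> R[i])
    (A B : T -> T -> R[i]) :
  (forall a, finitary_bij (n + N) (F a) (F' a)) ->
  (forall a b, sA_kernel chi C (F' b \o F a) (A a b) (B a b)) ->
  0 <= \sum_a \sum_b (c a)^* * c b * (A a b *+ N + B a b *+ (N * N.-1)).
Proof.
move=> BF K.
apply: (chi_gram chi_char c (U := fun i : 'I_N => sA C (n + i)) BF) => [i|a b i j].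
  by apply: finitary_bij_sA; rewrite ?leq_addr ?ltn_add2l.
by rewrite K ?leq_addr // eqn_add2l.
Qed.

Variables (s r1 r2 : {perm n.-tuple bool}).
Hypotheses (sE : s = (r2 * r1)%g) (r1K : involutive r1) (r2K : involutive r2).
Hypotheses (r1C : {in C, forall t, r1 t = t}) (r2C : {in C, forall t, r2 t = t}).
Hypothesis s_kernel : sA_kernel chi C (actS2 s) (chi (actS2 s)) (chi (actS2 s)).
Hypothesis sV_kernel : sA_kernel chi C (actS2 s^-1) (chi (actS2 s^-1)) (chi (actS2 s^-1)).

Local Notation L := (chi (sA C n)).
Local Notation z := (chi (actS2 s)).

Lemma chi_actS2V : chi (actS2 s^-1) = z.
Proof.
rewrite sE invMg !involutive_permV // !actS2M.
exact: (chi_comm chi_char (finitary_bij_actS2 r2 (leqnn n))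
                            (finitary_bij_actS2 r1 (leqnn n))).
Qed.

Lemma gram_upper N : (0 < N)%N -> 0 <= (1 - L) - (z - L) *+ N.
Proof.
move=> N0.
have BF (b : bool) :
    finitary_bij (n + N) (if b then actS2 s else id) (if b then actS2 s^-1 else id).
  by case: b; [apply: finitary_bij_actS2; apply: leq_addr | exact: finitary_bij_id].
have K (a b : bool) :
    sA_kernel chi C ((if b then actS2 s^-1 else id) \o (if a then actS2 s else id))
      (if a == b then 1 else z) (if a == b then L else z).
  case: a; case: b; rewrite /= ?actS2VK; first exact: sA_kernel_id.
  - exact: s_kernel.
  - by rewrite -chi_actS2V; exact: sV_kernel.
  - exact: sA_kernel_id.
(* The Gram form of [chi_gram_sA] is [N.*2] times the claimed quantity. *)
rewrite -(@pmulrn_lge0 _ _ N.*2) ?double_gt0 //.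
apply: le_trans (chi_gram_sA (fun b : bool => if b then 1 else -1) BF K) _.
rewrite !big_bool /= rmorphN rmorph1 le_eqVlt; apply/predU1P; left.
by case: N N0 {BF K} => // N _; rewrite -mul2n; ring.
Qed.

Lemma gram_lower N : (0 < N)%N ->
  0 <= 3%:R + L - (chi (actS2 r1) + chi (actS2 r2)) *+ 2 + (z - L) *+ N.
Proof.
move=> N0; set c1 := chi (actS2 r1); set c2 := chi (actS2 r2).
pose F (a : 'I_3) := nth id [:: actS2 r1; id; actS2 r2] a.
have BF a : finitary_bij (n + N) (F a) (F a).
  have nN : (n <= n + N)%N by apply: leq_addr.
  case: a => [[|[|[|//]]] ?]; rewrite /F /=; try exact: finitary_bij_id.
    exact: finitary_bij_invol (finitary_actS2 _ nN) (actS2_invol r1K).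
  exact: finitary_bij_invol (finitary_actS2 _ nN) (actS2_invol r2K).
have rrK (r : {perm n.-tuple bool}) : involutive r -> actS2 r \o actS2 r = id.
  by move=> rK; apply: funext => x; apply: actS2_invol.
have r1r2 : actS2 r1 \o actS2 r2 = actS2 s by rewrite sE actS2M.
have r2r1 : actS2 r2 \o actS2 r1 = actS2 s^-1.
  by rewrite sE invMg !involutive_permV // actS2M.
pose A (a b : 'I_3) := nth 0 (nth [::] [:: [:: 1; c1; z]; [:: c1; 1; c2]; [:: z; c2; 1]] a) b.
pose B (a b : 'I_3) := nth 0 (nth [::] [:: [:: L; L; z]; [:: L; L; L]; [:: z; L; L]] a) b.
have K a b : sA_kernel chi C (F b \o F a) (A a b) (B a b).
  have Kid := sA_kernel_id chi_char C.
  have Kr1 := sA_kernel_invol chi_char r1K r1C.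
  have Kr2 := sA_kernel_invol chi_char r2K r2C.
  case: a => [[|[|[|//]]] ?]; case: b => [[|[|[|//]]] ?];
    rewrite /F /A /B /= ?rrK ?r1r2 ?r2r1 //;
    first [exact: Kid | exact: Kr1 | exact: Kr2 | exact: s_kernel
          | rewrite -chi_actS2V; exact: sV_kernel].
rewrite -(@pmulrn_lge0 _ _ N.*2) ?double_gt0 //.
apply: le_trans (chi_gram_sA (fun a : 'I_3 => nth 0 [:: 1; -2; 1] a) BF K) _.
rewrite !big_ord_recl !big_ord0 /A /B /= ?rmorphN ?rmorph1 ?rmorph_nat le_eqVlt.
apply/predU1P; left.
by case: N N0 {BF K} => // N _; rewrite -mul2n; ring.
Qed.
End GramBounds.

Lemma natmul_bounded_le0 (R : archiRealFieldType) (d K : R) :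
  (forall N, (0 < N)%N -> d *+ N <= K) -> d <= 0.
Proof.
move=> bnd; rewrite leNgt; apply/negP => d_gt0.
pose N := (Num.bound (`|K| / d)).+1.
have lt_KN : `|K| / d < N%:R.
  apply: lt_le_trans (archi_boundP _) _; first by rewrite divr_ge0 // ltW.
  by rewrite ler_nat /N.
have := bnd N isT; apply/negP; rewrite -ltNge.
apply: le_lt_trans (ler_norm K) _.
by rewrite -(ltr_pM2r d_gt0) divfK ?gt_eqF // mulr_natl in lt_KN.
Qed.

Lemma complex_natmul_squeeze (R : realType) (d K1 K2 : R[i]) :
  (forall N, (0 < N)%N -> 0 <= K1 - d *+ N /\ 0 <= K2 + d *+ N) -> d = 0.
Proof.
move=> bnd.
have Re_bnd N : (0 < N)%N ->
    complex.Re d *+ N <= complex.Re K1 /\ (- complex.Re d) *+ N <= complex.Re K2.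
  move=> N0; have [] := bnd N N0; rewrite !lecE /= => /andP[_ h1] /andP[_ h2].
  rewrite raddfB raddfMn subr_ge0 in h1; rewrite raddfD raddfMn in h2.
  by split; rewrite // mulNrn -subr_ge0 opprK.
(* On [R[i]], [0 <= x] forces [x] to be real; this is what pins down [Im d]. *)
have Im_eq N : (0 < N)%N -> complex.Im K1 = complex.Im d *+ N.
  move=> N0; have [] := bnd N N0; rewrite lecE /= => /andP[/eqP h _] _.
  by move: h; rewrite raddfB raddfMn => /eqP; rewrite subr_eq0 => /eqP.
have Im_d : complex.Im d = 0.
  have := Im_eq 2%N isT.
  by rewrite (Im_eq 1%N isT) mulr2n -{1}[complex.Im d]addr0 => /addrI.
have Re_d : complex.Re d = 0.
  apply/eqP; rewrite eq_le -oppr_le0.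
  by rewrite (natmul_bounded_le0 (fun N N0 => (Re_bnd N N0).1))
             (natmul_bounded_le0 (fun N N0 => (Re_bnd N N0).2)).
by apply/eqP; rewrite eq_complex Re_d Im_d /= !eqxx.
Qed.

Lemma cvg_eventually_cst (R : realType) (u : nat -> R) (c l : R) (n : nat) :
  (forall m, (n <= m)%N -> u m = c) -> u @ \oo --> l -> c = l.
Proof.
move=> uc ul; apply: cvg_unique ul => //.
by apply: cvg_near_cst; exists n => // m /= /uc.
Qed.

Lemma fixed_tuplesV n (s : {perm n.-tuple bool}) : fixed_tuples s^-1 = fixed_tuples s.
Proof.
apply/setP => t; rewrite !inE.
by apply/eqP/eqP => E; [rewrite -{1}E permKV | rewrite -{1}E permK].
Qed.

Lemma chi_even_cycles (R : realType) (chi : (X -> X) -> R[i]) n (s : {perm n.-tuple bool}) :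
  is_character chi -> cycles_one_or_even s -> chi (actS2 s) = chi (sA (fixed_tuples s) n).
Proof.
move=> chi_char cyc; set C := fixed_tuples s.
have [r1 [r2 [sE r1K r2K fixed_r]]] := perm_involution_factor s.
have r1C : {in C, forall t, r1 t = t} by move=> t; rewrite inE => /eqP /fixed_r [].
have r2C : {in C, forall t, r2 t = t} by move=> t; rewrite inE => /eqP /fixed_r [].
have [Q [Qmoved Qalt]] := even_cycles_colouring cyc.
have cycV t : #|porbit s^-1 t| = 1%N \/ ~~ odd #|porbit s^-1 t| by rewrite porbitV.
have [QV [QVmoved QValt]] := even_cycles_colouring cycV.
have Ks := sA_kernel_colouring chi_char Qmoved Qalt.
have KV := sA_kernel_colouring chi_char QVmoved QValt; rewrite fixed_tuplesV in KV.
apply/eqP; rewrite -subr_eq0; apply/eqP; apply: complex_natmul_squeeze => N N0.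
split; first exact: (gram_upper chi_char sE r1K r2K Ks KV N0).
exact: (gram_lower chi_char sE r1K r2K r1C r2C Ks KV N0).
Qed.

Unset Implicit Arguments.
Theorem mainTheorem7 (R : realType) (chi : (X -> X) -> R[i]) (alpha : \bar R) :
  is_indecomposable_character chi ->
  (0 <= alpha)%E ->
  (forall (k : nat) (C : {set k.-tuple bool}),
      (fun m => complex.Re (chi (sA C m))) @ \oo --> powE (mu_cyl R C) alpha /\
      (fun m => complex.Im (chi (sA C m))) @ \oo --> (0 : R)) ->
  forall (n : nat) (s : {perm n.-tuple bool}),
    cycles_one_or_even s ->
    chi (actS2 s) = ((powE (mu_cyl R (fixed_tuples s)) alpha)%:C)%C.
Proof.
move=> [chi_char _] _ lim_sA n s cyc; rewrite (chi_even_cycles chi_char cyc).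
set C := fixed_tuples s; have [lim_Re lim_Im] := lim_sA n C.
have chi_sA_n := chi_sA chi_char C.
apply/eqP; rewrite eq_complex /=; apply/andP; split; apply/eqP.
  by apply: cvg_eventually_cst lim_Re => m /chi_sA_n ->.
by apply: cvg_eventually_cst lim_Im => m /chi_sA_n ->.
Qed.
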